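(* Fix a uniformity $r\ge2$, positive integers $\ell>r$ and $s$, and a nonnegative integer $t$. Every $C_{s\ell+rt}^{(r)}$-hom-free $r$-graph is also $C_\ell^{(r)}$-hom-free.
   Context: An $r$-graph is an $r$-uniform hypergraph. For $m>r$, the tight cycle $C_m^{(r)}$ has vertices $v_1,\dots,v_m$ and edges $\{v_i,\dots,v_{i+r-1}\}$, $1\le i\le m$ (indices mod $m$). A homomorphism $F\to G$ is a map $V(F)\to V(G)$ sending each edge of $F$ onto an edge of $G$; $G$ is $F$-hom-free if there is no homomorphism $F\to G$. *)

From mathcomp Require Import all_boot.
Set Implicit Arguments. Unset Strict Implicit. Unset Printing Implicit Defensive.

Definition uniform (r : nat) (V : finType) (E : {set {set V}}) : Prop :=
  forall e, e \in E -> #|e| = r.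

(* The tight cycle C_m^(r) on vertex set 'I_m (v_1..v_m are 0..m-1):
   its edges are {v_i, ..., v_{i+r-1}} (indices mod m), i.e. for each i the set
   of j with (j - i) mod m < r. *)
Definition tight_cycle (m r : nat) : {set {set 'I_m}} :=
  [set [set j : 'I_m | ((j + m - i) %% m < r)%N] | i : 'I_m].

Definition is_hom (U V : finType) (F : {set {set U}}) (G : {set {set V}})
  (f : U -> V) : Prop :=
  forall e, e \in F -> f @: e \in G.

Definition hom_free (U V : finType) (F : {set {set U}}) (G : {set {set V}}) : Prop :=
  ~ exists f : U -> V, is_hom F G f.

(* Wind C_m, m = s l + r t, around C_l: the first r t vertices go t times
   around the single edge {0, ..., r-1} of C_l (p |-> p mod r), the last s l
   go s times around C_l (r t + x |-> x mod l).  Every edge of C_m is sent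
   onto an edge of C_l (this needs r <= l <= s l), so this is a homomorphism
   C_m -> C_l, and composing it with any homomorphism C_l -> G yields one
   C_m -> G. *)

From mathcomp Require Import all_boot zify.

Set Implicit Arguments.
Unset Strict Implicit.
Unset Printing Implicit Defensive.

Definition cdist (m i j : nat) := (j + m - i) %% m.

Lemma cdistK m i j : i < m -> j < m -> (i + cdist m i j) %% m = j.
Proof.
move=> lt_im lt_jm; rewrite /cdist modnDmr subnKC ?modnDr ?modn_small //.
exact/ltnW/ltn_addl.
Qed.

Lemma cdist_shift m i d : i < m -> d < m -> cdist m i ((i + d) %% m) = d.
Proof.
move=> lt_im lt_dm; rewrite /cdist.
have le_i : i <= (i + d) %% m + m by exact/ltnW/ltn_addl.
have : i + ((i + d) %% m + m - i) = i + d %[mod m].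
  by rewrite subnKC // modnDr modn_mod.
by move/eqP; rewrite eqn_modDl (modn_small lt_dm) => /eqP.
Qed.

Definition tight_edge (m r : nat) (i : 'I_m) : {set 'I_m} :=
  [set j : 'I_m | cdist m i j < r].

Lemma tight_cycleE m r : tight_cycle m r = [set tight_edge r i | i : 'I_m].
Proof. by []. Qed.

Lemma tight_edgeP m r (i j : 'I_m) : r <= m ->
  reflect (exists2 d, d < r & val j = (i + d) %% m) (j \in tight_edge r i).
Proof.
move=> le_rm; rewrite inE; apply: (iffP idP) => [lt_r | [d lt_dr ->]].
  by exists (cdist m i j); rewrite ?cdistK.
by rewrite cdist_shift // (leq_trans lt_dr).
Qed.

Definition window_map (m l r : nat) (W : nat -> nat) :=
  forall i, i < m -> exists2 c, c < l & forall y,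
    (exists2 d, d < r & y = W ((i + d) %% m)) <-> (exists2 d, d < r & y = (c + d) %% l).

Lemma tight_cycle_hom m l r (W : nat -> nat) (W_lt : forall p, W p < l) :
  r <= m -> r <= l -> window_map m l r W ->
  is_hom (tight_cycle m r) (tight_cycle l r) (fun p : 'I_m => Ordinal (W_lt p)).
Proof.
move=> le_rm le_rl W_win; rewrite /is_hom !tight_cycleE => _ /imsetP[i _ ->].
have [c lt_cl win_i] := W_win i (ltn_ord i).
apply/imsetP; exists (Ordinal lt_cl) => //; apply/setP => y.
apply/imsetP/(tight_edgeP _ _ le_rl) => [[j /(tight_edgeP _ _ le_rm)[d lt_dr j_id] ->]|].
  by apply/win_i; exists d; rewrite //= -j_id.
case/win_i=> d lt_dr y_id.
have lt_m : (i + d) %% m < m by rewrite ltn_pmod // (leq_ltn_trans _ (ltn_ord i)).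
exists (Ordinal lt_m); last exact: val_inj.
by apply/(tight_edgeP _ _ le_rm); exists d.
Qed.

Definition wrap (r t l p : nat) := if p < r * t then p %% r else (p - r * t) %% l.

Lemma wrap_lt r t l p : 0 < r -> r <= l -> wrap r t l p < l.
Proof.
move=> r_gt0 le_rl; rewrite /wrap; case: ifP => _.
  exact: leq_trans (ltn_pmod _ r_gt0) le_rl.
exact/ltn_pmod/(leq_trans r_gt0).
Qed.

Lemma wrap_shift r t l x : wrap r t l (r * t + x) = x %% l.
Proof. by rewrite /wrap ltnNge leq_addr addKn. Qed.

Lemma wrap_small r t l p : r <= l -> p < r * t + r -> wrap r t l p = p %% r.
Proof.
move=> le_rl lt_p; rewrite /wrap; case: ltnP => // le_rt_p.
by rewrite -{2}(subnKC le_rt_p) mulnC modnMDl !modn_small //; lia.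
Qed.

Lemma eq_exists2_lt r (f g : nat -> nat) y : (forall d, d < r -> f d = g d) ->
  (exists2 d, d < r & y = f d) <-> (exists2 d, d < r & y = g d).
Proof. by move=> fg; split=> -[d lt_dr ->]; exists d; rewrite ?fg. Qed.

Lemma residue_window r i y : (exists2 d, d < r & y = (i + d) %% r) <-> y < r.
Proof.
split=> [[d lt_dr ->] | lt_yr]; first exact/ltn_pmod/(leq_ltn_trans _ lt_dr).
have r_gt0 : 0 < r by exact: leq_ltn_trans lt_yr.
exists (cdist r (i %% r) y); first exact: ltn_pmod.
by rewrite -modnDml cdistK ?ltn_pmod.
Qed.

Lemma wrap_window_low r t l s i d : r <= l -> 0 < s -> i < r * t -> d < r ->
  wrap r t l ((i + d) %% (s * l + r * t)) = (i + d) %% r.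
Proof.
move=> le_rl s_gt0 lt_i lt_dr; have le_l_sl : l <= s * l by rewrite leq_pmull.
by rewrite modn_small ?wrap_small //; lia.
Qed.

Lemma wrap_window_high r t l s x d : r <= l -> x < s * l -> d < r ->
  wrap r t l ((r * t + x + d) %% (s * l + r * t)) = (x + d) %% l.
Proof.
move=> le_rl lt_x lt_dr.
have le_l_sl : l <= s * l by rewrite leq_pmull //; case: s lt_x.
case: (ltnP (x + d) (s * l)) => [lt_xd | le_xd].
  by rewrite modn_small -?addnA ?wrap_shift //; lia.
have -> : r * t + x + d = (x + d - s * l) + (s * l + r * t) by lia.
rewrite modnDr modn_small ?wrap_small; try lia.
by rewrite -{2}(subnKC le_xd) modnMDl !modn_small //; lia.
Qed.

Lemma wrap_window r t l s : 0 < r -> r <= l -> 0 < s ->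
  window_map (s * l + r * t) l r (wrap r t l).
Proof.
move=> r_gt0 le_rl s_gt0 i lt_im; case: (ltnP i (r * t)) => [lt_i | le_i].
  exists 0 => [|y]; first exact: leq_trans le_rl.
  rewrite (eq_exists2_lt _ (fun d lt_dr => wrap_window_low le_rl s_gt0 lt_i lt_dr)).
  rewrite residue_window (@eq_exists2_lt _ _ id) => [|d lt_dr]; last first.
    by rewrite modn_small // (leq_trans lt_dr).
  by split=> [lt_yr | [d lt_dr ->]]; first exists y.
exists ((i - r * t) %% l); first exact/ltn_pmod/(leq_trans r_gt0).
move=> y; apply: eq_exists2_lt => d lt_dr.
by rewrite modnDml -(subnKC le_i) wrap_window_high ?addKn //; lia.
Qed.

Lemma is_hom_comp (U V W : finType) (F : {set {set U}}) (G : {set {set V}})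
    (H : {set {set W}}) (f : U -> V) (g : V -> W) :
  is_hom F G f -> is_hom G H g -> is_hom F H (g \o f).
Proof. by move=> hom_f hom_g e /hom_f/hom_g; rewrite imset_comp. Qed.

Lemma hom_free_of_hom (U V W : finType) (F : {set {set U}}) (G : {set {set V}})
    (H : {set {set W}}) (f : U -> V) :
  is_hom F G f -> hom_free F H -> hom_free G H.
Proof.
move=> hom_f F_free [g hom_g]; apply: F_free.
by exists (g \o f); apply: is_hom_comp hom_g.
Qed.

Theorem proposition2p3 (r l s t : nat) (V : finType) (E : {set {set V}}) :
  (2 <= r)%N -> (r < l)%N -> (0 < s)%N -> uniform r E ->
  hom_free (tight_cycle (s * l + r * t) r) E ->
  hom_free (tight_cycle l r) E.
Proof.
move=> r_ge2 lt_rl s_gt0 _.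
have r_gt0 : 0 < r by exact: ltnW.
have le_rl : r <= l by exact: ltnW.
have le_rm : r <= s * l + r * t.
  by apply: leq_trans (leq_addr _ _); rewrite (leq_trans le_rl) ?leq_pmull.
have wrap_lt_l p : wrap r t l p < l by exact: wrap_lt.
apply: hom_free_of_hom.
exact: tight_cycle_hom wrap_lt_l le_rm le_rl (wrap_window r_gt0 le_rl s_gt0).
Qed.
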